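(* Let $D_{28}$ be the $28\times 28$ integer matrix $\begin{pmatrix} A & B\\ -B^T & A^T\end{pmatrix}$, where $A$ and $B$ are $14\times 14$ negacirculant matrices with first rows $r_A=(0,1,2,0,0,0,0,0,0,0,0,0,2,1)$ and $r_B=(-1,0,1,-1,0,2,-1,2,0,1,1,0,-1,2)$. (This matrix satisfies $D_{28}D_{28}^T=29I$ and $D_{28}^T=-D_{28}$.) Let $C_5(D_{28})$ be the $\mathbb{Z}_5$-code of length $56$ with generator matrix $(I\ \ D_{28})$, entries read modulo $5$. Then $A_5(C_5(D_{28}))$ contains a $k$-frame for every positive integer $k\ge 5$ that is not of the form $2^{m_1}3^{m_2}7^{m_3}17^{m_4}23^{m_5}$ with $m_1,\dots,m_5$ non-negative integers.
   Context: An $N\times N$ negacirculant matrix with first row $(r_0,\dots,r_{N-1})$ is the matrix whose $(i,j)$ entry ($0\le i,j\le N-1$) is $r_{j-i}$ if $j\ge i$ and $-r_{N+j-i}$ if $j<i$. Construction A: with $\rho:\mathbb{Z}_k\to\mathbb{Z}$ sending $0,1,\dots,k-1$ to $0,1,\dots,k-1$, for a $\mathbb{Z}_k$-code $C$ of length $N$ set $A_k(C)=\frac{1}{\sqrt{k}}\{\rho(C)+k\mathbb{Z}^N\}$. A $t$-frame of a lattice in dimension $N$ is a set of $N$ lattice vectors $f_1,\dots,f_N$ with $(f_i,f_j)=t\,\delta_{i,j}$. *)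

From HB Require Import structures.
From mathcomp Require Import all_boot all_order all_algebra.
Set Implicit Arguments. Unset Strict Implicit. Unset Printing Implicit Defensive.
Import Order.TTheory GRing.Theory Num.Theory.
Local Open Scope ring_scope.

Definition negacirculant (N : nat) (r : seq int) : 'M[int]_N :=
  \matrix_(i < N, j < N)
    if (i <= j)%N then r`_(j - i) else - r`_(N + j - i).

Definition rA : seq int := [:: 0; 1; 2; 0; 0; 0; 0; 0; 0; 0; 0; 0; 2; 1].
Definition rB : seq int :=
  [:: -1; 0; 1; -1; 0; 2; -1; 2; 0; 1; 1; 0; -1; 2].

Definition A14 : 'M[int]_14 := negacirculant 14 rA.
Definition B14 : 'M[int]_14 := negacirculant 14 rB.

Definition D28 : 'M[int]_(14 + 14) := block_mx A14 B14 (- B14^T) A14^T.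

Definition red (k : nat) (z : int) : 'Z_k := z%:~R.

Definition gen5 : 'M['Z_5]_(14 + 14, (14 + 14) + (14 + 14)) :=
  row_mx 1%:M (map_mx (red 5) D28).

Definition code_of (k m n : nat) (G : 'M['Z_k]_(m, n)) : 'rV['Z_k]_n -> Prop :=
  fun c => exists u : 'rV['Z_k]_m, c = u *m G.

Definition C5D28 := code_of gen5.

Definition rho (k : nat) (a : 'Z_k) : int := (nat_of_ord a)%:Z.

(* Construction A: A_k(C) = 1/sqrt(k) (rho(C) + k Z^n).
   A vector of A_k(C) is represented by y in Z^n (the lattice vector is
   y / sqrt k); membership means y is in rho(C) + k Z^n. *)
Definition inAk (k n : nat) (C : 'rV['Z_k]_n -> Prop) (y : 'rV[int]_n) : Prop :=
  exists c, C c /\ exists z : 'rV[int]_n, y = map_mx (@rho k) c + k%:Z *: z.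

(* inner product of the lattice vectors y/sqrt k and y'/sqrt k, times k *)
Definition dotZ (n : nat) (y y' : 'rV[int]_n) : int := (y *m y'^T) 0 0.

Definition has_frame (k n : nat) (C : 'rV['Z_k]_n -> Prop) (t : nat) : Prop :=
  exists f : 'I_n -> 'rV[int]_n,
    (forall i, inAk C (f i)) /\
    (forall i j, dotZ (f i) (f j) = if i == j then (k * t)%:Z else 0).

From HB Require Import structures.
From mathcomp Require Import all_boot all_order all_algebra ring zify.
Set Implicit Arguments. Unset Strict Implicit. Unset Printing Implicit Defensive.
Import GRing.Theory Num.Theory.
Local Open Scope ring_scope.

(* Write D = D_28 and J = [[0, I], [-I, 0]].  For a skew matrix Q commuting with D, the matrices
   I, [[0, Q], [Q, 0]], [[D, 0], [0, -D]] and J are pairwise orthogonal for the polar form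
   (A, B) |-> A B^T + B A^T of the Gram map, so
     F = 5 (x0 I + [[0, Q], [Q, 0]] + c J) + b [[D, I], [-I, -D]]
   has F F^T = 5 (5 (x0^2 + q + c^2) + 6 b^2 + 2 b c) I when Q Q^T = q I.  Modulo 5, F is b times
   [[D, I], [-I, -D]], whose rows are codewords of (I D) because D^2 = -29 I = I (mod 5); hence the
   rows of F form a frame of A_5(C_5(D)).  Taking Q = x1 Q1 + x2 Q2 + x3 Q3 for a quaternionic
   triple Q1, Q2, Q3 commuting with D gives q = x1^2 + x2^2 + x3^2, so by Lagrange's four-square
   theorem there are frames of every norm 5 m + 6 b^2 + 2 b c + 5 c^2.  The binary form represents
   the classes mod 5 by 0, 6, 22, 13, 9, which leaves only t = 7, 8, 12, 17 among t >= 5. *)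

Section Gram.
Variables (R : comRingType) (m n : nat).
Implicit Types (A B C : 'M[R]_(m, n)) (a : R).

Definition gram A : 'M[R]_m := A *m A^T.
Definition polar A B : 'M[R]_m := A *m B^T + B *m A^T.

Lemma gramD A B : gram (A + B) = gram A + gram B + polar A B.
Proof.
rewrite /gram /polar linearD /= mulmxDl !mulmxDr.
by rewrite [B *m A^T + _]addrC addrACA.
Qed.

Lemma gramZ a A : gram (a *: A) = a ^+ 2 *: gram A.
Proof. by rewrite /gram linearZ /= -scalemxAl -scalemxAr scalerA. Qed.

Lemma polarC A B : polar A B = polar B A.
Proof. by rewrite /polar addrC. Qed.

Lemma polarDl A B C : polar (A + B) C = polar A C + polar B C.
Proof. by rewrite /polar linearD /= mulmxDl mulmxDr addrACA. Qed.

Lemma polarDr A B C : polar A (B + C) = polar A B + polar A C.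
Proof. by rewrite polarC polarDl !(polarC A). Qed.

Lemma polarZl a A B : polar (a *: A) B = a *: polar A B.
Proof. by rewrite /polar linearZ /= -scalemxAl -scalemxAr scalerDr. Qed.

Lemma polarZr a A B : polar A (a *: B) = a *: polar A B.
Proof. by rewrite polarC polarZl polarC. Qed.

Lemma polar_id A : polar A A = gram A *+ 2.
Proof. by rewrite /polar mulr2n. Qed.

Lemma polar0r A : polar A 0 = 0.
Proof. by rewrite /polar trmx0 mulmx0 mul0mx addr0. Qed.

Lemma gram_sum (I : eqType) (r : seq I) (A : I -> 'M[R]_(m, n)) (a : I -> R) :
    uniq r -> {in r &, forall i j, i != j -> polar (A i) (A j) = 0} ->
  gram (\sum_(i <- r) a i *: A i) = \sum_(i <- r) a i ^+ 2 *: gram (A i).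
Proof.
elim: r => [|i r IH] /=; first by rewrite !big_nil /gram mul0mx.
case/andP=> ir ur orthA.
have orth_r : {in r &, forall j l, j != l -> polar (A j) (A l) = 0}.
  by move=> j l jr lr; apply: orthA; rewrite inE ?jr ?lr orbT.
rewrite !big_cons gramD gramZ IH //.
suff -> : polar (a i *: A i) (\sum_(j <- r) a j *: A j) = 0 by rewrite addr0.
rewrite (big_morph (polar _) (polarDr _) (polar0r _)) big1_seq // => j /andP[_ jr].
rewrite polarZl polarZr orthA ?scaler0 ?inE ?eqxx ?jr ?orbT //.
by apply: contraNneq ir => ->.
Qed.

End Gram.

Lemma gram_scalar (R : comRingType) n (x : R) : gram (x%:M : 'M[R]_n) = (x ^+ 2)%:M.
Proof. by rewrite /gram tr_scalar_mx -scalar_mxM expr2. Qed.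

Lemma polar_scalar_skew (R : comRingType) n (x : R) (A : 'M[R]_n) :
  A^T = - A -> polar x%:M A = 0.
Proof.
by move=> skewA; rewrite /polar tr_scalar_mx mul_scalar_mx mul_mx_scalar skewA scalerN addNr.
Qed.

Section SkewDoubling.
Variables (R : comRingType) (n : nat) (D : 'M[R]_n) (d : R).
Hypotheses (D_skew : D^T = - D) (gram_D : gram D = d%:M).

Definition swap_mx (Q : 'M[R]_n) : 'M[R]_(n + n) := block_mx 0 Q Q 0.
Definition symp_mx : 'M[R]_(n + n) := block_mx 0 1%:M (- 1%:M) 0.
Definition pmdiag_mx : 'M[R]_(n + n) := block_mx D 0 0 (- D).

Lemma swap_mx_skew Q : Q^T = - Q -> (swap_mx Q)^T = - swap_mx Q.
Proof. by move=> skewQ; rewrite tr_block_mx !trmx0 skewQ opp_block_mx oppr0. Qed.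

Lemma symp_mx_skew : symp_mx^T = - symp_mx.
Proof. by rewrite tr_block_mx !trmx0 raddfN /= trmx1 opp_block_mx opprK oppr0. Qed.

Lemma pmdiag_mx_skew : pmdiag_mx^T = - pmdiag_mx.
Proof. by rewrite tr_block_mx !trmx0 raddfN /= D_skew opp_block_mx oppr0. Qed.

Lemma gram_swap_mx Q q : gram Q = q%:M -> gram (swap_mx Q) = q%:M.
Proof.
move=> gramQ; rewrite /gram tr_block_mx !trmx0 mulmx_block.
by rewrite !mulmx0 !mul0mx !addr0 !add0r -/(gram Q) gramQ -scalar_mx_block.
Qed.

Lemma gram_symp_mx : gram symp_mx = 1%:M.
Proof.
rewrite /gram tr_block_mx !trmx0 raddfN /= trmx1 mulmx_block.
by rewrite !mulmx0 !mul0mx !addr0 !add0r mulmx1 mulNmx mulmxN mul1mx opprK -scalar_mx_block.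
Qed.

Lemma gram_pmdiag_mx : gram pmdiag_mx = d%:M.
Proof.
rewrite /gram tr_block_mx !trmx0 raddfN /= mulmx_block.
by rewrite !mulmx0 !mul0mx !addr0 !add0r mulNmx mulmxN opprK -/(gram D) gram_D -scalar_mx_block.
Qed.

Lemma polar_swap_symp Q : Q^T = - Q -> polar (swap_mx Q) symp_mx = 0.
Proof.
move=> skewQ; rewrite /polar tr_block_mx !trmx0 raddfN /= trmx1 tr_block_mx !trmx0 skewQ.
rewrite !mulmx_block !mulmx0 !mul0mx !addr0 !add0r !mulmx1 !mul1mx !mulmxN !mulNmx !opprK.
by rewrite add_block_mx mulmx1 mul1mx subrr addNr addr0 block_mx0.
Qed.

Lemma polar_swap_pmdiag Q : Q^T = - Q -> Q *m D = D *m Q -> polar (swap_mx Q) pmdiag_mx = 0.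
Proof.
move=> skewQ QD; rewrite /polar !tr_block_mx !trmx0 raddfN /= skewQ D_skew.
rewrite !mulmx_block !mulmx0 !mul0mx !addr0 !add0r !mulmxN !mulNmx !opprK QD.
by rewrite add_block_mx subrr addNr addr0 block_mx0.
Qed.

Lemma polar_pmdiag_symp : polar pmdiag_mx symp_mx = 0.
Proof.
rewrite /polar !tr_block_mx !trmx0 !raddfN /= trmx1 D_skew.
rewrite !mulmx_block !mulmx0 !mul0mx !addr0 !add0r !mulmxN !mulNmx !mulmx1 !mul1mx !opprK.
by rewrite add_block_mx addNr addr0 block_mx0.
Qed.

Definition frame_mx (k x c b : R) (Q : 'M[R]_n) : 'M[R]_(n + n) :=
  k *: (x%:M + swap_mx Q + c *: symp_mx) + b *: (pmdiag_mx + symp_mx).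

Lemma gram_frame_mx k x c b Q q :
    Q^T = - Q -> Q *m D = D *m Q -> gram Q = q%:M ->
  gram (frame_mx k x c b Q) =
    (k ^+ 2 * (x ^+ 2 + q + c ^+ 2) + b ^+ 2 * (d + 1) + 2 * k * b * c)%:M.
Proof.
move=> skewQ QD gramQ.
have skewS := swap_mx_skew skewQ.
have gram_X : gram (x%:M + swap_mx Q + c *: symp_mx) = (x ^+ 2 + q + c ^+ 2)%:M.
  rewrite !gramD !gramZ gram_scalar (gram_swap_mx gramQ) gram_symp_mx.
  rewrite polar_scalar_skew // polarDl !polarZr polar_scalar_skew ?symp_mx_skew //.
  rewrite polar_swap_symp // !scaler0 !addr0 scale_scalar_mx mulr1.
  by rewrite -!raddfD.
have gram_M : gram (pmdiag_mx + symp_mx) = (d + 1)%:M.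
  by rewrite gramD gram_pmdiag_mx gram_symp_mx polar_pmdiag_symp addr0 -raddfD.
have polar_XM : polar (x%:M + swap_mx Q + c *: symp_mx) (pmdiag_mx + symp_mx) = (c *+ 2)%:M.
  rewrite !polarDl !polarDr !polar_scalar_skew ?pmdiag_mx_skew ?symp_mx_skew //.
  rewrite polar_swap_pmdiag // polar_swap_symp // !polarZl polarC polar_pmdiag_symp.
  by rewrite polar_id gram_symp_mx scaler0 !add0r -raddfMn scale_scalar_mx mulr_natr.
rewrite /frame_mx gramD !gramZ polarZl polarZr gram_X gram_M polar_XM.
rewrite !scale_scalar_mx -!raddfD /=; congr (_%:M); ring.
Qed.

Definition code_defect p (Y : 'M[R]_(p, n + n)) : 'M[R]_(p, n) := rsubmx Y - lsubmx Y *m D.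

Lemma code_defectD p (Y Z : 'M[R]_(p, n + n)) :
  code_defect (Y + Z) = code_defect Y + code_defect Z.
Proof. by rewrite /code_defect !linearD /= mulmxDl opprD addrACA. Qed.

Lemma code_defectZ p a (Y : 'M[R]_(p, n + n)) : code_defect (a *: Y) = a *: code_defect Y.
Proof. by rewrite /code_defect !linearZ /= -scalemxAl scalerBr. Qed.

Lemma code_defect_frame_mx k x c b Q e : d + 1 = k * e ->
  exists W, code_defect (frame_mx k x c b Q) = k *: W.
Proof.
move=> dk.
set X := x%:M + swap_mx Q + c *: symp_mx.
have defect_M : code_defect (pmdiag_mx + symp_mx) = k *: col_mx e%:M 0.
  rewrite /code_defect add_block_mx block_mxEh row_mxKl row_mxKr mul_col_mx.
  have DD : D *m D = - d%:M by rewrite -gram_D /gram D_skew mulmxN opprK.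
  rewrite !addr0 !add0r mulNmx mul1mx DD opp_col_mx add_col_mx !opprK addNr.
  by rewrite scale_col_mx scaler0 scale_scalar_mx -raddfD addrC dk.
exists (code_defect X + b *: col_mx e%:M 0).
by rewrite /frame_mx code_defectD !code_defectZ defect_M [RHS]scalerDr !scalerA mulrC.
Qed.

End SkewDoubling.

Lemma rho_red k z : (1 < k)%N -> rho (red k z) = (z %% k)%Z.
Proof.
move=> k1.
have k0 : k%:Z != 0 by lia.
rewrite /red {1}(divz_eq z k) intrD intrM.
rewrite -pmulrn pchar_Zp // mulr0 add0r.
have kpos : 0 < k%:Z by lia.
case: (z %% k)%Z (modz_ge0 z k0) (ltz_pmod z kpos) => // r _.
by rewrite ltz_nat /rho -pmulrn val_Zp_nat // => /modn_small ->.
Qed.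

Lemma rows_inAk k n p (D : 'M[int]_n) (Y : 'M[int]_(p, n + n)) W :
    (1 < k)%N -> rsubmx Y - lsubmx Y *m D = k%:Z *: W ->
  forall i, inAk (code_of (row_mx 1%:M (map_mx (red k) D))) (row i Y).
Proof.
move=> k1 defect i; exists (map_mx (red k) (row i Y)); split.
  exists (map_mx (red k) (row i (lsubmx Y))).
  rewrite mul_mx_row mulmx1 -{1}[Y]hsubmxK row_row_mx map_row_mx /red -map_mxM.
  rewrite -[rsubmx Y](subrK (lsubmx Y *m D)) defect; congr row_mx.
  apply/matrixP => a b; rewrite !mxE intrD intrM -pmulrn pchar_Zp // mul0r add0r.
  by rewrite /=; under [in RHS]eq_bigr => j _ do rewrite mxE.
exists (map_mx (fun v => (v %/ k)%Z) (row i Y)).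
by apply/matrixP => a b; rewrite !mxE rho_red // mulrC addrC -divz_eq.
Qed.

Lemma has_frame_of_gram k n (C : 'rV['Z_k]_n -> Prop) (F : 'M[int]_n) t :
  (forall i, inAk C (row i F)) -> gram F = (k * t)%:Z%:M -> has_frame C t.
Proof.
move=> rowsF gramF; exists (fun i => row i F); split => // i j.
have -> : dotZ (row i F) (row j F) = gram F i j.
  by rewrite /dotZ !mxE; apply: eq_bigr => l _; rewrite !mxE.
by rewrite gramF mxE; case: (i == j).
Qed.

Definition sum4sq (n : int) : Prop :=
  exists x0 x1 x2 x3 : int, n = x0 ^+ 2 + x1 ^+ 2 + x2 ^+ 2 + x3 ^+ 2.

Lemma euler_four_square (a1 a2 a3 a4 b1 b2 b3 b4 : int) :
  (a1 ^+ 2 + a2 ^+ 2 + a3 ^+ 2 + a4 ^+ 2) * (b1 ^+ 2 + b2 ^+ 2 + b3 ^+ 2 + b4 ^+ 2) =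
  (a1 * b1 + a2 * b2 + a3 * b3 + a4 * b4) ^+ 2 + (a1 * b2 - a2 * b1 + a3 * b4 - a4 * b3) ^+ 2
  + (a1 * b3 - a3 * b1 + a4 * b2 - a2 * b4) ^+ 2 + (a1 * b4 - a4 * b1 + a2 * b3 - a3 * b2) ^+ 2.
Proof. ring. Qed.

Lemma sum4sqM a b : sum4sq a -> sum4sq b -> sum4sq (a * b).
Proof.
move=> [a1 [a2 [a3 [a4 ->]]]] [b1 [b2 [b3 [b4 ->]]]].
by rewrite euler_four_square; do 4 eexists.
Qed.

Lemma sqr_sub_even (a : int) : (2 %| a ^+ 2 - a)%Z.
Proof.
have [q [->|->]] : exists q, a = q * 2 \/ a = q * 2 + 1 by exists (a %/ 2)%Z; lia.
  by apply/dvdzP; exists (2 * q ^+ 2 - q); ring.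
by apply/dvdzP; exists (2 * q ^+ 2 + q); ring.
Qed.

Lemma sum4sq_half M : sum4sq (2 * M) -> sum4sq M.
Proof.
move=> [a [b [c [d E]]]].
have pair_half (x y z w : int) : (2 %| x - y)%Z -> (2 %| z - w)%Z ->
    2 * M = x ^+ 2 + y ^+ 2 + z ^+ 2 + w ^+ 2 -> sum4sq M.
  move=> /dvdzP[u xy] /dvdzP[v zw] EM.
  exists (y + u), u, (w + v), v.
  have Ex : x = y + 2 * u by lia.
  have Ez : z = w + 2 * v by lia.
  by apply: (@mulfI _ 2) => //; rewrite EM Ex Ez; ring.
have /dvdzP[ta Ea] := sqr_sub_even a; have /dvdzP[tb Eb] := sqr_sub_even b.
have /dvdzP[tc Ec] := sqr_sub_even c; have /dvdzP[td Ed] := sqr_sub_even d.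
have [ab|ab] := boolP (2 %| a - b)%Z; first by apply: (pair_half a b c d) => //; lia.
have [ac|ac] := boolP (2 %| a - c)%Z.
  by apply: (pair_half a c b d) => //; lia.
by apply: (pair_half a d b c) => //; lia.
Qed.

Lemma centered_residue (a m h : int) : m = 2 * h + 1 -> 0 <= h ->
  exists b k, a = b + m * k /\ - h <= b <= h.
Proof.
move=> Em h0; have m0 : 0 < m by lia.
exists (a - m * ((a + h) %/ m)%Z), ((a + h) %/ m)%Z; split; first by rewrite subrK.
have := divz_eq (a + h) m; have := modz_ge0 (a + h) (lt0r_neq0 m0).
have := ltz_pmod (a + h) m0; lia.
Qed.

Lemma sqr_le_bound (b h : int) : - h <= b <= h -> b ^+ 2 <= h ^+ 2.
Proof. nia. Qed.

Lemma sqr_sum4_eq0 (b1 b2 b3 b4 : int) :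
  b1 ^+ 2 + b2 ^+ 2 + b3 ^+ 2 + b4 ^+ 2 = 0 -> [/\ b1 = 0, b2 = 0, b3 = 0 & b4 = 0].
Proof. by move=> S0; split; nia. Qed.

Lemma prime_no_proper_divisor (p : nat) (m k : int) :
  prime p -> 1 < m < p%:Z -> p%:Z = m * k -> False.
Proof.
move=> pr mp Ep; have /(prime_nt_dvdP pr) : `|m|%N != 1%N by lia.
have dvd_mp : (m %| p%:Z)%Z by apply/dvdzP; exists k; rewrite Ep mulrC.
by move/(_ dvd_mp); lia.
Qed.

(* Euler's identity for (m p) (m r), whose four squares are all divisible by m. *)
Lemma descent_identity (m p r b1 b2 b3 b4 k1 k2 k3 k4 : int) :
    m * p = (b1 + m * k1) ^+ 2 + (b2 + m * k2) ^+ 2 + (b3 + m * k3) ^+ 2 + (b4 + m * k4) ^+ 2 ->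
    b1 ^+ 2 + b2 ^+ 2 + b3 ^+ 2 + b4 ^+ 2 = m * r ->
  m * m * (r * p) = m * m * ((r + (k1 * b1 + k2 * b2 + k3 * b3 + k4 * b4)) ^+ 2
    + (k1 * b2 - k2 * b1 + k3 * b4 - k4 * b3) ^+ 2 + (k1 * b3 - k3 * b1 + k4 * b2 - k2 * b4) ^+ 2
    + (k1 * b4 - k4 * b1 + k2 * b3 - k3 * b2) ^+ 2).
Proof.
move=> E Eb; transitivity ((m * p) * (m * r)); first by ring.
have c1 : (b1 + m * k1) * b1 + (b2 + m * k2) * b2 + (b3 + m * k3) * b3 + (b4 + m * k4) * b4
          = m * (r + (k1 * b1 + k2 * b2 + k3 * b3 + k4 * b4)) by rewrite mulrDr -Eb; ring.
by rewrite E -Eb euler_four_square c1; ring.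
Qed.

Lemma sum4sq_odd_descent (p : nat) (m h a1 a2 a3 a4 : int) :
    prime p -> m = 2 * h + 1 -> 0 < h -> m < p%:Z ->
    m * p%:Z = a1 ^+ 2 + a2 ^+ 2 + a3 ^+ 2 + a4 ^+ 2 ->
  exists2 r, 0 < r < m & sum4sq (r * p%:Z).
Proof.
move=> pr Em h0 mp E; have h_ge0 : 0 <= h by lia.
have [b1 [k1 [Ea1 /sqr_le_bound B1]]] := centered_residue a1 Em h_ge0.
have [b2 [k2 [Ea2 /sqr_le_bound B2]]] := centered_residue a2 Em h_ge0.
have [b3 [k3 [Ea3 /sqr_le_bound B3]]] := centered_residue a3 Em h_ge0.
have [b4 [k4 [Ea4 /sqr_le_bound B4]]] := centered_residue a4 Em h_ge0.
subst a1 a2 a3 a4.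
have [r Er] : exists r, r = p%:Z - 2 * (b1 * k1 + b2 * k2 + b3 * k3 + b4 * k4)
                             - m * (k1 ^+ 2 + k2 ^+ 2 + k3 ^+ 2 + k4 ^+ 2) by eexists.
have Eb : b1 ^+ 2 + b2 ^+ 2 + b3 ^+ 2 + b4 ^+ 2 = m * r.
  apply/eqP; rewrite -subr_eq0; apply/eqP.
  by rewrite Er -[X in _ = X](subrr (m * p%:Z)) [X in _ = X - _]E; ring.
(* The context is cleared before [lia], which would otherwise expand the squares in E. *)
have m0 : 0 < m by clear -Em h0; lia.
have S_ge0 : 0 <= b1 ^+ 2 + b2 ^+ 2 + b3 ^+ 2 + b4 ^+ 2 by rewrite !addr_ge0 ?sqr_ge0.
have r_ge0 : 0 <= r by rewrite -(pmulr_rge0 _ m0) -Eb.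
have r_lt : r < m.
  rewrite -(ltr_pM2l m0) -Eb (_ : m * m = 4 * h ^+ 2 + 4 * h + 1).
    by clear -B1 B2 B3 B4 h0; lia.
  by rewrite Em; ring.
have r_neq0 : r != 0.
  apply/eqP=> r0; move: Eb; rewrite r0 mulr0 => /sqr_sum4_eq0[b1z b2z b3z b4z].
  have mp1 : 1 < m < p%:Z by clear -Em h0 mp; lia.
  apply: (prime_no_proper_divisor pr mp1 (_ : p%:Z = m * (k1 ^+ 2 + k2 ^+ 2 + k3 ^+ 2 + k4 ^+ 2))).
  by apply: (mulfI (lt0r_neq0 m0)); rewrite E b1z b2z b3z b4z; ring.
exists r; first by rewrite lt0r r_neq0 r_ge0 r_lt.
do 4 eexists; apply: (mulfI (_ : m * m != 0)); first by rewrite mulf_neq0 // lt0r_neq0.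
exact: descent_identity E Eb.
Qed.

Lemma sum2sq_neg1_mod (p : nat) : prime p -> odd p ->
  exists x y : nat, [/\ (2 * x < p)%N, (2 * y < p)%N & (p %| x ^ 2 + y ^ 2 + 1)%N].
Proof.
move=> pr odd_p; set h := p./2.
have ph : p = h.*2.+1 by rewrite -[LHS]odd_double_half odd_p.
have sq_inj : injective (fun x : 'I_h.+1 => (x%:R : 'F_p) ^+ 2).
  move=> x y /eqP; rewrite eqf_sqr => /orP[] /eqP Exy; apply/val_inj => /=.
    have := congr1 val Exy; rewrite /= !val_Fp_nat // !modn_small //.
      by have := ltn_ord y; lia.
    by have := ltn_ord x; lia.
  have : (p %| x + y)%N by rewrite (dvdn_pcharf (pchar_Fp pr)) natrD Exy addNr.
  have := ltn_ord x; have := ltn_ord y.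
  case: (posnP (x + y)) => [|xy0 xh yh /(dvdn_leq xy0)]; lia.
have neg_sq_inj : injective (fun y : 'I_h.+1 => - 1 - (y%:R : 'F_p) ^+ 2).
  by move=> x y /addrI /oppr_inj /sq_inj.
set S1 := [set (x%:R : 'F_p) ^+ 2 | x : 'I_h.+1].
set S2 := [set - 1 - (y%:R : 'F_p) ^+ 2 | y : 'I_h.+1].
have : (0 < #|S1 :&: S2|)%N.
  have := max_card (mem (S1 :|: S2)); rewrite cardsU card_Fp //.
  by rewrite !card_imset // card_ord; lia.
case/card_gt0P => z /setIP[/imsetP[x _ ->] /imsetP[y _ Exy]].
exists x, y; split; [by have := ltn_ord x; lia | by have := ltn_ord y; lia |].
rewrite (dvdn_pcharf (pchar_Fp pr)) !natrD !natrX Exy.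
by rewrite subrK addNr.
Qed.

Lemma sum4sq_prime (p : nat) : prime p -> sum4sq p%:Z.
Proof.
move=> pr; have [->|odd_p] := even_prime pr; first by exists 1, 1, 0, 0.
have p2 : (2 < p)%N by have := prime_gt1 pr; case: p odd_p {pr} => [|[|[|]]].
suff descend (m : nat) : (0 < m < p)%N -> sum4sq (m%:Z * p%:Z) -> sum4sq p%:Z.
  have [x [y [xp yp dvd_p]]] := sum2sq_neg1_mod pr odd_p.
  have /dvdnP[m Em] := dvd_p.
  apply: (descend m); first by nia.
  by exists x%:Z, y%:Z, 1, 0; rewrite -PoszM -Em; lia.
elim/ltn_ind: m => m IH /andP[m0 mp] Sm.
have [m1|m1] := eqVneq m 1%N; first by rewrite m1 mul1r in Sm.
have [odd_m|even_m] := boolP (odd m); last first.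
  have Em : m = (2 * m./2)%N by rewrite -[m in LHS]odd_double_half (negbTE even_m) -mul2n.
  apply: (IH m./2); [lia | lia |].
  by apply: sum4sq_half; rewrite mulrA -[2 * _]/(Posz (2 * m./2)) -Em.
move: Sm => [a1 [a2 [a3 [a4 E]]]].
have [|||r /andP[r0 rm] Sr] := sum4sq_odd_descent pr (_ : m%:Z = 2 * (m./2)%:Z + 1) _ _ E.
- by rewrite -[m in LHS]odd_double_half odd_m; lia.
- by lia.
- by lia.
have [r' Er] : exists r' : nat, r = r'%:Z by exists `|r|%N; lia.
by apply: (IH r'); [lia | lia | rewrite -Er].
Qed.

Lemma four_square (n : nat) : sum4sq n%:Z.
Proof.
elim/ltn_ind: n => n IH; have [n1|n1] := leqP n 1.
  by case: n n1 {IH} => [|[|]] // _; [exists 0, 0, 0, 0 | exists 1, 0, 0, 0].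
have pr := pdiv_prime n1; have p1 := prime_gt1 pr.
rewrite -(divnK (pdiv_dvd n)) PoszM; apply: sum4sqM (sum4sq_prime pr).
by apply: IH; rewrite ltn_Pdiv //; lia.
Qed.

(* Explicit integer matrices are checked by [vm_compute] on tables of entries.  Every operation
   takes and returns tables, so that call-by-value evaluation computes each intermediate matrix
   once instead of recomputing its entries on demand. *)
Section IntegerTables.
Variable n : nat.
Implicit Types (f : nat -> nat -> int) (s t : seq (seq int)).

Definition entry s i j : int := nth 0 (nth [::] s i) j.
Definition tab f : seq (seq int) := mkseq (fun i => mkseq (f i) n) n.
Definition mxtab s : 'M[int]_n := \matrix_(i, j) entry s i j.

Definition sumtab (h : nat -> int) : int := foldr (fun k acc => h k + acc) 0 (iota 0 n).
Definition trtab s := tab (fun i j => entry s j i).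
Definition opptab s := tab (fun i j => - entry s i j).
Definition addtab s t := tab (fun i j => entry s i j + entry t i j).
Definition multab s t := tab (fun i j => sumtab (fun k => entry s i k * entry t k j)).
Definition eqtab s t : bool :=
  all (fun i => all (fun j => entry s i j == entry t i j) (iota 0 n)) (iota 0 n).

Lemma matrix_tab f : \matrix_(i < n, j < n) f i j = mxtab (tab f).
Proof. by apply/matrixP => i j; rewrite !mxE /entry !nth_mkseq. Qed.

Lemma mxtabP s t : eqtab s t -> mxtab s = mxtab t.
Proof.
move=> /allP st; apply/matrixP => i j; rewrite !mxE.
have iota_ord (k : 'I_n) : (k : nat) \in iota 0 n by rewrite mem_iota ltn_ord.
by have /allP/(_ j (iota_ord j))/eqP := st i (iota_ord i).
Qed.

Lemma sumtabE h : sumtab h = \sum_(k < n) h k.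
Proof.
rewrite /sumtab -(big_mkord xpredT) /index_iota subn0.
by elim: (iota 0 n) => [|k r IH]; rewrite ?big_nil ?big_cons //= IH.
Qed.

Lemma trmx_tab s : (mxtab s)^T = mxtab (trtab s).
Proof. by rewrite -matrix_tab; apply/matrixP => i j; rewrite !mxE. Qed.

Lemma oppmx_tab s : - mxtab s = mxtab (opptab s).
Proof. by rewrite -matrix_tab; apply/matrixP => i j; rewrite !mxE. Qed.

Lemma addmx_tab s t : mxtab s + mxtab t = mxtab (addtab s t).
Proof. by rewrite -matrix_tab; apply/matrixP => i j; rewrite !mxE. Qed.

Lemma mulmx_tab s t : mxtab s *m mxtab t = mxtab (multab s t).
Proof.
rewrite -matrix_tab; apply/matrixP => i j; rewrite !mxE sumtabE.
by apply: eq_bigr => k _; rewrite !mxE.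
Qed.

Lemma scalar_mx_tab (a : int) : a%:M = mxtab (tab (fun i j => if i == j then a else 0)).
Proof.
rewrite -matrix_tab; apply/matrixP => i j; rewrite !mxE.
by have -> : (i == j) = (val i == val j) by []; case: (_ == _); rewrite ?mulr1n.
Qed.

Lemma zeromx_tab : 0 = mxtab (tab (fun _ _ => 0)).
Proof. by rewrite -matrix_tab; apply/matrixP => i j; rewrite !mxE. Qed.

End IntegerTables.

Definition blocktab n (s11 s12 s21 s22 : seq (seq int)) : seq (seq int) :=
  tab (n + n) (fun i j =>
    if (i < n)%N then (if (j < n)%N then entry s11 i j else entry s12 i (j - n))
    else if (j < n)%N then entry s21 (i - n) j else entry s22 (i - n) (j - n)).

Lemma block_mx_tab n s11 s12 s21 s22 :
  block_mx (mxtab n s11) (mxtab n s12) (mxtab n s21) (mxtab n s22)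
  = mxtab (n + n) (blocktab n s11 s12 s21 s22).
Proof.
rewrite -matrix_tab; apply/matrixP => i j; rewrite [RHS]mxE.
case: (split_ordP i) => i' ->; case: (split_ordP j) => j' ->;
  by rewrite ?block_mxEul ?block_mxEur ?block_mxEdl ?block_mxEdr !mxE /= ?addKn.
Qed.

Lemma negacirculant_tab N r : negacirculant N r =
  mxtab N (tab N (fun i j => if (i <= j)%N then r`_(j - i) else - r`_(N + j - i))).
Proof. by rewrite -matrix_tab. Qed.

(* Q1 = diag(P, P) and Q2 = [[0, R], [-R, 0]], where P is the negacirculant of x^7 and R the
   matrix of the involution x |-> x^-1 of Z[x]/(x^14 + 1), satisfy the relations of the quaternion
   units i, j; together with Q1 Q2 they are skew, orthonormal and commute with D28. *)
Definition P14 : 'M[int]_14 := negacirculant 14 (nseq 7 0 ++ [:: 1]).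
Definition R14 : 'M[int]_14 :=
  \matrix_(i < 14, j < 14) if (i + j == 0)%N then 1 else if (i + j == 14)%N then -1 else 0.

Definition quat_i : 'M[int]_(14 + 14) := block_mx P14 0 0 P14.
Definition quat_j : 'M[int]_(14 + 14) := block_mx 0 R14 (- R14) 0.
Definition quat (i : 'I_3) : 'M[int]_(14 + 14) := [:: quat_i; quat_j; quat_i *m quat_j]`_i.

Lemma R14_tab : R14 = mxtab 14 (tab 14 (fun i j =>
  if (i + j == 0)%N then 1 else if (i + j == 14)%N then -1 else 0)).
Proof. by rewrite -matrix_tab. Qed.

Ltac tab_eval :=
  rewrite /quat /gram /polar /= /quat_i /quat_j /P14 /D28 /A14 /B14 ?R14_tab ?negacirculant_tab
    ?zeromx_tab ?scalar_mx_tab;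
  repeat rewrite ?trmx_tab ?mulmx_tab ?addmx_tab ?oppmx_tab ?block_mx_tab;
  apply: mxtabP; vm_compute; reflexivity.

Lemma D28_skew : D28^T = - D28.
Proof. by tab_eval. Qed.

Lemma gram_D28 : gram D28 = 29%:M.
Proof. by tab_eval. Qed.

Lemma quat_skew i : (quat i)^T = - quat i.
Proof. by case: i => [[|[|[|//]]] ?]; tab_eval. Qed.

Lemma quat_D28 i : quat i *m D28 = D28 *m quat i.
Proof. by case: i => [[|[|[|//]]] ?]; tab_eval. Qed.

Lemma gram_quat i : gram (quat i) = 1%:M.
Proof. by case: i => [[|[|[|//]]] ?]; tab_eval. Qed.

Lemma polar_quat i j : i != j -> polar (quat i) (quat j) = 0.
Proof. by case: i j => [[|[|[|//]]] ?] [[|[|[|//]]] ?] //= _; tab_eval. Qed.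

Lemma frame_norm_decomposition (t : nat) : (5 <= t)%N -> t \notin [:: 7; 8; 12; 17]%N ->
  exists (m : nat) (b c : int), t%:Z = 5 * m%:Z + (6 * b ^+ 2 + 2 * b * c + 5 * c ^+ 2).
Proof.
rewrite !inE => t5 t_ok.
have : (t %% 5 < 5)%N by rewrite ltn_mod.
case Et: (t %% 5)%N => [|[|[|[|[|//]]]]] _.
- by exists (t %/ 5)%N, 0, 0; rewrite !expr2; lia.
- by exists (t %/ 5 - 1)%N, 1, 0; rewrite !expr2; lia.
- by exists (t %/ 5 - 4)%N, 1, (-2); rewrite !expr2; lia.
- by exists (t %/ 5 - 2)%N, 1, 1; rewrite !expr2; lia.
- by exists (t %/ 5 - 1)%N, 1, (-1); rewrite !expr2; lia.
Qed.

Lemma has_frame_C5D28 (t m : nat) (b c : int) :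
  t%:Z = 5 * m%:Z + (6 * b ^+ 2 + 2 * b * c + 5 * c ^+ 2) -> has_frame C5D28 t.
Proof.
move=> Et; have [x0 [x1 [x2 [x3 Em]]]] := four_square m.
pose x (i : 'I_3) := [:: x1; x2; x3]`_i.
pose Q := \sum_(i < 3) x i *: quat i.
have Q_skew : Q^T = - Q.
  rewrite linear_sum /= -sumrN; apply: eq_bigr => i _.
  by rewrite linearZ /= quat_skew scalerN.
have QD : Q *m D28 = D28 *m Q.
  rewrite mulmx_suml mulmx_sumr; apply: eq_bigr => i _.
  by rewrite -scalemxAl -scalemxAr quat_D28.
have gramQ : gram Q = (x1 ^+ 2 + x2 ^+ 2 + x3 ^+ 2)%:M.
  have orth_quat : {in index_enum 'I_3 &, forall i j, i != j -> polar (quat i) (quat j) = 0}.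
    by move=> i j _ _; apply: polar_quat.
  rewrite /Q gram_sum ?index_enum_uniq //.
  under eq_bigr => i _ do rewrite gram_quat scale_scalar_mx mulr1.
  by rewrite -raddf_sum !big_ord_recr big_ord0 /= add0r.
have d1 : 29 + 1 = 5 * 6 :> int by [].
have [W defect] := code_defect_frame_mx D28_skew gram_D28 x0 c b Q d1.
apply: (has_frame_of_gram (F := frame_mx D28 5 x0 c b Q)); first exact: rows_inAk defect.
rewrite (gram_frame_mx D28_skew gram_D28 5 x0 c b Q_skew QD gramQ); congr (_%:M).
by rewrite PoszM Et Em; ring.
Qed.

Theorem lemma6p1 (t : nat) :
  (5 <= t)%N ->
  ~ (exists m1 m2 m3 m4 m5 : nat,
        t = (2 ^ m1 * 3 ^ m2 * 7 ^ m3 * 17 ^ m4 * 23 ^ m5)%N) ->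
  has_frame C5D28 t.
Proof.
move=> t5 not_smooth.
have [|m [b [c Et]]] := frame_norm_decomposition t5; last exact: has_frame_C5D28 Et.
apply/negP; rewrite !inE => /or4P[] /eqP Et; apply: not_smooth; rewrite Et.
- by exists 0%N, 0%N, 1%N, 0%N, 0%N.
- by exists 3%N, 0%N, 0%N, 0%N, 0%N.
- by exists 2%N, 1%N, 0%N, 0%N, 0%N.
- by exists 0%N, 0%N, 0%N, 1%N, 0%N.
Qed.
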